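(* Let $\bm\sigma=\sigma_1\bm e_1+\dots+\sigma_r\bm e_r\in\mathbb{Z}^r$ be a changemaker vector with $\sigma_r\ge2$ and let $L=\langle\bm\sigma\rangle^\perp\subseteq\mathbb{Z}^r$. Then any obtuse superbase for $L$ contains at most one reducible vector. In particular, any obtuse superbase for $L$ contains a basis of $L$ consisting of irreducible vectors.
   Context: $\mathbb{Z}^r$ has the standard pairing. A changemaker vector is $\bm\sigma=\sum\sigma_i\bm e_i$ (in some orthonormal basis) with $\sigma_1=1$ and $\sigma_{i-1}\le\sigma_i\le1+\sigma_1+\dots+\sigma_{i-1}$. An obtuse superbase of a rank-$k$ lattice $L$ is a spanning set $\{v_0,\dots,v_k\}$ with $v_i\cdot v_j\le 0$ for $i\ne j$ and $\sum v_i=0$. A non-zero $v\in L$ is irreducible if whenever $v=x+y$ with $x,y\in L$ non-zero we have $x\cdot y\le -1$; otherwise it is reducible. *)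

From mathcomp Require Import all_boot all_order all_algebra.
Set Implicit Arguments. Unset Strict Implicit. Unset Printing Implicit Defensive.
Import Order.TTheory GRing.Theory Num.Theory.
Local Open Scope ring_scope.

Definition dot (r : nat) (x y : 'rV[int]_r) : int := \sum_(i < r) x ord0 i * y ord0 i.

(* changemaker vector (0-indexed: entry 0 is sigma_1) *)
Definition changemaker (r : nat) (s : 'rV[int]_r) : Prop :=
  (forall i : 'I_r, val i = 0%N -> s ord0 i = 1) /\
  (forall i j : 'I_r, val j = (val i).+1 ->
     s ord0 i <= s ord0 j /\ s ord0 j <= 1 + \sum_(k < r | (k <= i)%N) s ord0 k).

Definition inL (r : nat) (s x : 'rV[int]_r) : Prop := dot x s = 0.

Definition spansL (r : nat) (s : 'rV[int]_r) (I : finType) (P : pred I)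
  (w : I -> 'rV[int]_r) : Prop :=
  (forall i, P i -> inL s (w i)) /\
  (forall x, inL s x -> exists c : I -> int, x = \sum_(i | P i) c i *: w i).

Definition basisL (r : nat) (s : 'rV[int]_r) (I : finType) (P : pred I)
  (w : I -> 'rV[int]_r) : Prop :=
  spansL s P w /\
  (forall c : I -> int, \sum_(i | P i) c i *: w i = 0 -> forall i, P i -> c i = 0).

(* obtuse superbase {v_0, ..., v_k} of L (L of rank k) *)
Definition obtuse_superbase (r k : nat) (s : 'rV[int]_r) (v : 'I_k.+1 -> 'rV[int]_r)
  : Prop :=
  spansL s predT v /\
  (forall i j, i != j -> dot (v i) (v j) <= 0) /\
  \sum_i v i = 0.

Definition irreducible (r : nat) (s v : 'rV[int]_r) : Prop :=
  inL s v /\ v != 0 /\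
  (forall x y, inL s x -> inL s y -> x != 0 -> y != 0 -> v = x + y -> dot x y <= -1).

Definition reducible (r : nat) (s v : 'rV[int]_r) : Prop :=
  inL s v /\ v != 0 /\ ~ irreducible s v.

(* A reducible vector [v_a] of an obtuse superbase splits L orthogonally.
   Write [v_a = x + y] with [x . y >= 0], [x = \sum_i c_i v_i] and
   [y = \sum_i d_i v_i].  Because the Gram matrix of a superbase has zero row
   sums, [2 x . y = - \sum_(i,j) (c_i - c_j) (d_i - d_j) v_i . v_j].  As
   [(c_i - c_j) + (d_i - d_j)] lies in [{-1, 0, 1}] and [v_i . v_j <= 0] for
   [i <> j], every term of that sum is nonnegative, so all of them vanish.
   Hence, away from [a], no Gram edge joins [{c_i = c_a}] to [{c_i <> c_a}]:
   the two families of superbase vectors span orthogonal sublattices whose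
   sum is L, every other [v_b] lies in one of them, and [v_a] has a nonzero
   component in each.

   A changemaker lattice has a triangular basis of indecomposable vectors
   [u_j] ([u_j] has entry [-1] at [j] and vanishes after [j]), and these fall
   into at most two mutually orthogonal classes.  A third class could only
   start at a [u_m] that is orthogonal to everything supported before [m].
   That forces [s_0 = ... = s_(m-1) = 1], and then everything before [m]
   lies in a single [A_(m-1)] component.  So L has at most one nontrivial
   orthogonal splitting.  Two reducible vectors [v_a <> v_b] would give two
   splittings, with [v_b] inside one side of the first but meeting both
   sides of the second.

   Finally L is free of rank [n], so the [n] superbase vectors left after
   removing the reducible one (if there is one) form a basis. *)

From mathcomp Require Import all_boot all_order all_algebra.
From mathcomp Require Import zify ring.
From Stdlib Require Import Classical.
Import Order.TTheory GRing.Theory Num.Theory.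
Local Open Scope ring_scope.
Set Implicit Arguments. Unset Strict Implicit. Unset Printing Implicit Defensive.

Lemma free_of_mutual_span (R : comUnitRingType) k m (U V : 'M[R]_(k, m)) (A B : 'M[R]_k) :
  V = A *m U -> U = B *m V -> (forall c : 'rV_k, c *m U = 0 -> c = 0) ->
  forall c : 'rV_k, c *m V = 0 -> c = 0.
Proof.
move=> VAU UBV freeU c cV0.
have BA1 : B *m A = 1%:M.
  apply/eqP; rewrite -subr_eq0; apply/eqP/row_matrixP => l; rewrite row0; apply: freeU.
  by rewrite -row_mul mulmxBl -mulmxA -VAU -UBV mul1mx subrr row0.
have cA0 : c *m A = 0 by apply: freeU; rewrite -mulmxA -VAU.
by rewrite -[c]mulmx1 -(mulmx1C BA1) mulmxA cA0 mul0mx.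
Qed.

Lemma sum_neq_lift (V : zmodType) n (F : 'I_n.+1 -> V) j :
  \sum_(i | i != j) F i = \sum_(l < n) F (lift j l).
Proof.
have e1 : \sum_i F i = F j + \sum_(i | i != j) F i := bigD1 j isT.
have e2 : \sum_i F i = F j + \sum_(l < n) F (lift j l) := bigD1_ord j (P := xpredT) isT.
by apply: (@addrI _ (F j)); rewrite -e1 -e2.
Qed.

Section Pairing.
Variable r : nat.
Implicit Types x y z : 'rV[int]_r.

Lemma dotC x y : dot x y = dot y x.
Proof. by apply: eq_bigr => i _; rewrite mulrC. Qed.

Lemma dotDl x y z : dot (x + y) z = dot x z + dot y z.
Proof. by rewrite /dot -big_split; apply: eq_bigr => i _; rewrite mxE mulrDl. Qed.

Lemma dotZl a x y : dot (a *: x) y = a * dot x y.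
Proof. by rewrite /dot mulr_sumr; apply: eq_bigr => i _; rewrite mxE mulrA. Qed.

Lemma dotNl x y : dot (- x) y = - dot x y.
Proof. by rewrite -scaleN1r dotZl mulN1r. Qed.

Lemma dot0l y : dot 0 y = 0.
Proof. by rewrite -(scale0r 0) dotZl mul0r. Qed.

Lemma dotBl x y z : dot (x - y) z = dot x z - dot y z.
Proof. by rewrite dotDl dotNl. Qed.

Lemma dotZr a x y : dot y (a *: x) = a * dot y x.
Proof. by rewrite dotC dotZl dotC. Qed.

Lemma dot0r y : dot y 0 = 0.
Proof. by rewrite dotC dot0l. Qed.

Lemma dotBr x y z : dot z (x - y) = dot z x - dot z y.
Proof. by rewrite !(dotC z) dotBl. Qed.

Lemma dot_suml (I : Type) (t : seq I) (P : pred I) (F : I -> 'rV[int]_r) y :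
  dot (\sum_(i <- t | P i) F i) y = \sum_(i <- t | P i) dot (F i) y.
Proof. by apply: (big_morph (fun x => dot x y)) => [a b|]; rewrite ?dotDl ?dot0l. Qed.

Lemma dot_sumr (I : Type) (t : seq I) (P : pred I) (F : I -> 'rV[int]_r) y :
  dot y (\sum_(i <- t | P i) F i) = \sum_(i <- t | P i) dot y (F i).
Proof. by rewrite dotC dot_suml; apply: eq_bigr => i _; apply: dotC. Qed.

Lemma dot_deltal k y : dot (delta_mx ord0 k) y = y ord0 k.
Proof.
rewrite /dot (bigD1 k) //= big1 => [|i /negbTE ik]; first by rewrite mxE !eqxx mul1r addr0.
by rewrite mxE ik mul0r.
Qed.

Lemma dot_deltar k y : dot y (delta_mx ord0 k) = y ord0 k.
Proof. by rewrite dotC dot_deltal. Qed.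

Lemma dot_self_eq0 x : (dot x x == 0) = (x == 0).
Proof.
apply/idP/eqP => [/eqP xx0|->]; last by rewrite dot0l.
have sq_ge0 i : predT i -> 0 <= x ord0 i * x ord0 i by rewrite -expr2 sqr_ge0.
apply/rowP => i; have /eqP := @psumr_eq0P _ _ predT _ sq_ge0 xx0 i isT.
by rewrite mxE mulf_eq0 orbb => /eqP.
Qed.

Lemma dot_eq0_entries x y : dot x y = 0 -> (forall i, x ord0 i * y ord0 i <= 0) ->
  forall i, x ord0 i * y ord0 i = 0.
Proof.
move=> xy0 le0 i; apply/eqP; rewrite -oppr_eq0; apply/eqP.
apply: (@psumr_eq0P _ _ predT (fun i => - (x ord0 i * y ord0 i))) => // [k _|].
  by rewrite oppr_ge0.
by rewrite sumrN -/(dot x y) xy0 oppr0.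
Qed.

End Pairing.

Lemma sum_nonpos_ge_m1 (I : finType) (P : pred I) (F : I -> int) :
  \sum_(i | P i) F i = -1 -> (forall i, P i -> F i <= 0) -> forall i, P i -> -1 <= F i.
Proof.
move=> sumF le0 i Pi; move: sumF; rewrite (bigD1 i) //=; set rest := (X in _ + X).
have : rest <= 0 by apply: sumr_le0 => k /andP [Pk _]; apply: le0.
lia.
Qed.

Lemma sum_sqr_eq1 (I : finType) (P : pred I) (x : I -> int) :
  \sum_(i | P i) x i ^+ 2 = 1 ->
  exists2 k, P k & x k ^+ 2 = 1 /\ forall i, P i -> i != k -> x i = 0.
Proof.
move=> sum1; have [k /andP [Pk xk0]] : exists k, P k && (x k != 0).
  apply/existsP; apply: contra_eqT sum1 => /existsPn all0.
  rewrite big1 // => i Pi; have := all0 i; rewrite Pi /= negbK => /eqP ->.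
  by rewrite expr0n.
have xk_ge1 : 1 <= x k ^+ 2.
  rewrite expr2; have : (x k <= -1) \/ (1 <= x k) by move/eqP: xk0; lia.
  by case; nia.
move: sum1; rewrite (bigD1 k) //=; set rest := (X in _ + X) => sum1.
have rest_ge0 : 0 <= rest by apply: sumr_ge0 => i _; apply: sqr_ge0.
have rest0 : rest = 0 by lia.
exists k => //; split; first by lia.
move=> i Pi ik; apply/eqP; rewrite -sqrf_eq0; apply/eqP.
by apply: (psumr_eq0P _ rest0) => [l _|]; rewrite ?sqr_ge0 ?Pi.
Qed.

Lemma sum_ord_split_at m (F : 'I_m -> int) (j : 'I_m) :
  \sum_i F i = \sum_(i < m | (i < j)%N) F i + F j + \sum_(i < m | (j < i)%N) F i.
Proof.
rewrite (bigID (fun i : 'I_m => (i < j)%N)) /= -addrA; congr (_ + _).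
rewrite (bigD1 j) ?ltnn //=; congr (_ + _); apply: eq_bigl => i.
by rewrite -leqNgt ltn_neqAle eq_sym andbC.
Qed.

Lemma split_unit_mul_le0 (a b c : int) : a + b = c -> -1 <= c <= 1 -> a * b <= 0.
Proof.
have : a <= -1 \/ a = 0 \/ 1 <= a by lia.
by case=> [?|[->|?]]; nia.
Qed.

Lemma unit_split_cases (a b c : int) :
  a + b = c -> c ^+ 2 = 1 -> -1 <= a * b -> a = 0 \/ a = c.
Proof.
move=> abc c2 ab; have : c = 1 \/ c = -1 by move: c2; rewrite expr2; nia.
have : a <= -2 \/ a = -1 \/ a = 0 \/ a = 1 \/ 2 <= a by lia.
by case=> [?|[?|[?|[?|?]]]] [] ?; subst; lia || nia.
Qed.

Section Lattice.
Variables (r : nat) (s : 'rV[int]_r).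
Implicit Types x y z p q : 'rV[int]_r.

Definition indecomposable x :=
  forall y z, inL s y -> inL s z -> y + z = x -> dot y z = 0 -> y = 0 \/ z = 0.

Definition orth_split (X : bool -> 'rV[int]_r -> Prop) :=
  [/\ forall b x, X b x -> inL s x,
      forall x y, X true x -> X false y -> dot x y = 0 &
      forall x, inL s x -> exists p q, [/\ X true p, X false q & x = p + q]].

Definition nontrivial_split X := orth_split X /\ forall b, exists2 x, X b x & x != 0.

Definition straddles (X : bool -> 'rV[int]_r -> Prop) x :=
  exists p q, [/\ X true p, X false q, p != 0, q != 0 & x = p + q].

Definition orth_classes (T : eqType) (R : T -> 'rV[int]_r -> Prop) :=
  (forall a b x y, a != b -> R a x -> R b y -> dot x y = 0) /\
  (forall x, inL s x -> x != 0 -> indecomposable x -> exists a, R a x).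

Lemma reducible_witness x : reducible s x ->
  exists y z, [/\ inL s y, inL s z, y != 0, z != 0 & x = y + z /\ 0 <= dot y z].
Proof.
move=> [Lx [x0 not_irr]]; apply: NNPP => no_witness; apply: not_irr.
split=> //; split=> // y z Ly Lz y0 z0 def_x; rewrite leNgt; apply/negP => yz_gt.
by apply: no_witness; exists y, z; split=> //; split=> //; lia.
Qed.

Lemma basisL_neq0 (I : finType) (P : pred I) w i :
  basisL s P w -> P i -> w i != 0.
Proof.
move=> [_ free] Pi; apply/eqP => wi0.
have sum0 : \sum_(k | P k) (k == i)%:R *: w k = 0.
  by rewrite (bigD1 i) //= eqxx scale1r wi0 add0r big1 // => k /andP [_ /negPf ->]; rewrite scale0r.
by move/eqP: (free _ sum0 i Pi); rewrite eqxx pnatr_eq0.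
Qed.

Section OneSplit.
Variable X : bool -> 'rV[int]_r -> Prop.
Hypothesis splitX : orth_split X.

Lemma split_inL b x : X b x -> inL s x.
Proof. by case: splitX => + _ _; apply. Qed.

Lemma split_orth b x y : X b x -> X (~~ b) y -> dot x y = 0.
Proof.
case: splitX => _ orthX _; case: b => /= Xx Xy; first exact: orthX.
by rewrite dotC; apply: orthX.
Qed.

Lemma split_decomp b x : inL s x -> exists p q, [/\ X b p, X (~~ b) q & x = p + q].
Proof.
case: splitX => _ _ /[apply] -[p [q [Xp Xq ->]]].
by case: b; [exists p, q | exists q, p; rewrite addrC].
Qed.

Lemma split_side_eq0 b x p q : X b x -> X b p -> X (~~ b) q -> x = p + q -> q = 0.
Proof.
move=> Xx Xp Xq def_x; apply/eqP; rewrite -dot_self_eq0.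
have def_q : q = x - p by rewrite def_x addrC addKr.
by rewrite {2}def_q dotBr !(split_orth Xq) ?negbK // subrr.
Qed.

Lemma indecomposable_split_side x : inL s x -> indecomposable x -> exists b, X b x.
Proof.
move=> Lx indx; have [p [q [Xp Xq def_x]]] := split_decomp true Lx.
have [p0|q0] := indx p q (split_inL Xp) (split_inL Xq) (esym def_x) (split_orth Xp Xq).
  by exists false; rewrite def_x p0 add0r.
by exists true; rewrite def_x q0 addr0.
Qed.

Lemma straddles_nontrivial x : straddles X x -> nontrivial_split X.
Proof. by move=> [p [q [Xp Xq p0 q0 _]]]; split => // -[]; [exists p | exists q]. Qed.

Lemma side_not_straddles b x : X b x -> ~ straddles X x.
Proof.
move=> Xx [p [q [Xp Xq p0 q0 def_x]]]; case: b Xx => Xx.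
  by move/eqP: q0; apply; apply: split_side_eq0 Xx Xp Xq def_x.
by move/eqP: p0; apply; rewrite addrC in def_x; apply: split_side_eq0 Xx Xq _ def_x.
Qed.

End OneSplit.

Lemma split_cells_orth_classes X Y : orth_split X -> orth_split Y ->
  orth_classes (fun gd : bool * bool => fun x => X gd.1 x /\ Y gd.2 x).
Proof.
move=> splitX splitY; split=> [[g d] [g' d'] x y /= neq [Xx Yx] [Xy Yy]|x Lx _ indx].
  have [eqg|gg'] := eqVneq g g'.
    subst g'; have d'E : d' = ~~ d by move: neq; rewrite xpair_eqE eqxx /=; case: (d) (d') => -[].
    by rewrite d'E in Yy; exact: (split_orth splitY Yx Yy).
  have g'E : g' = ~~ g by move: gg'; case: (g) (g') => -[].
  by rewrite g'E in Xy; exact: (split_orth splitX Xx Xy).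
have [g Xx] := indecomposable_split_side splitX Lx indx.
by have [d Yx] := indecomposable_split_side splitY Lx indx; exists (g, d).
Qed.

Lemma split_side_sub X Y g1 d1 g2 d2 :
  nontrivial_split X -> nontrivial_split Y ->
  (forall z, inL s z -> (forall y, (X g1 y /\ Y d1 y) \/ (X g2 y /\ Y d2 y) -> dot z y = 0) ->
     z = 0) ->
  forall g, exists d, forall x, X g x -> Y d x.
Proof.
move=> ntX ntY detect; have [splitX _] := ntX; have [splitY _] := ntY.
have one_side Z b : nontrivial_split Z ->
    ~ (forall y, (X g1 y /\ Y d1 y) \/ (X g2 y /\ Y d2 y) -> Z b y).
  move=> [splitZ ntZ] cells; have [w Zw /eqP] := ntZ (~~ b); apply; apply: detect => [|y /cells Zy].
    exact: (split_inL splitZ Zw).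
  by rewrite dotC (split_orth splitZ Zy).
have opp1 : g2 = ~~ g1.
  apply/eqP; apply: contraT => ne; have g21 : g2 = g1 by move: ne; case: (g1); case: (g2).
  by case: (one_side X g1 ntX); rewrite g21 => y [] [].
have opp2 : d2 = ~~ d1.
  apply/eqP; apply: contraT => ne; have d21 : d2 = d1 by move: ne; case: (d1); case: (d2).
  by case: (one_side Y d1 ntY); rewrite d21 => y [] [].
have nested g d : (forall z, inL s z ->
      (forall y, (X g y /\ Y d y) \/ (X (~~ g) y /\ Y (~~ d) y) -> dot z y = 0) -> z = 0) ->
    forall x, X g x -> Y d x.
  move=> detect' x Xx; have [p [q [Yp Yq def_x]]] := split_decomp splitY d (split_inL splitX Xx).
  suff q0 : q = 0 by rewrite def_x q0 addr0.
  apply: detect'; first exact: (split_inL splitY Yq).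
  move=> y [[_ Yy]|[Xy Yy]].
    by rewrite dotC (split_orth splitY Yy) // negbK.
  have -> : q = x - p by rewrite def_x addrC addKr.
  by rewrite dotBl (split_orth splitX Xx Xy) (split_orth splitY Yp Yy) subrr.
move=> g; subst g2 d2; case: (eqVneq g g1) => [->|gg1]; first by exists d1; apply: nested.
have -> : g = ~~ g1 by move: gg1; case: (g); case: (g1).
exists (~~ d1); apply: nested => z Lz orth_z; apply: detect => // y yc; apply: orth_z.
by rewrite !negbK; case: yc; [right | left].
Qed.

End Lattice.

Section Superbase.
Variables (r K : nat) (s : 'rV[int]_r) (v : 'I_K -> 'rV[int]_r).
Hypothesis sum_v : \sum_i v i = 0.
Implicit Types (c d f g : 'I_K -> int) (Q : pred 'I_K).

Local Notation G i j := (dot (v i) (v j)).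
Local Notation combo c := (\sum_i c i *: v i).

Lemma dot_combo c d : dot (combo c) (combo d) = \sum_i \sum_j c i * d j * G i j.
Proof.
rewrite dot_suml; apply: eq_bigr => i _; rewrite dotZl dot_sumr mulr_sumr.
by apply: eq_bigr => j _; rewrite dotZr mulrA.
Qed.

Lemma combo_shift c k : combo c = combo (fun i => c i - k).
Proof.
under [RHS]eq_bigr => i _ do rewrite scalerBl.
by rewrite sumrB -scaler_sumr sum_v scaler0 subr0.
Qed.

Lemma laplacian_dot c d :
  2 * dot (combo c) (combo d) = - \sum_i \sum_j (c i - c j) * (d i - d j) * G i j.
Proof.
have row0 i : \sum_j G i j = 0 by rewrite -dot_sumr sum_v dot0r.
have col0 j : \sum_i G i j = 0 by rewrite -dot_suml sum_v dot0l.
have -> : \sum_i \sum_j (c i - c j) * (d i - d j) * G i j =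
    \sum_i \sum_j c i * d i * G i j + \sum_i \sum_j c j * d j * G i j
    - \sum_i \sum_j c i * d j * G i j - \sum_i \sum_j c j * d i * G i j.
  rewrite -big_split -!sumrB /=; apply: eq_bigr => i _.
  by rewrite -big_split -!sumrB /=; apply: eq_bigr => j _; ring.
have -> : \sum_i \sum_j c i * d i * G i j = 0.
  by apply: big1 => i _; rewrite -mulr_sumr row0 mulr0.
have -> : \sum_i \sum_j c j * d j * G i j = 0.
  by rewrite exchange_big; apply: big1 => j _; rewrite -mulr_sumr col0 mulr0.
have -> : \sum_i \sum_j c j * d i * G i j = \sum_i \sum_j c i * d j * G i j.
  by rewrite exchange_big; apply: eq_bigr => i _; apply: eq_bigr => j _; rewrite dotC.
rewrite dot_combo; ring.
Qed.

Lemma dot_combo_edges c d c' d' :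
  (forall i j, G i j != 0 -> (c i - c j) * (d i - d j) = (c' i - c' j) * (d' i - d' j)) ->
  dot (combo c) (combo d) = dot (combo c') (combo d').
Proof.
move=> edges; apply: (@mulfI _ 2) => //; rewrite !laplacian_dot; congr (- _).
apply: eq_bigr => i _; apply: eq_bigr => j _.
by have [->|/edges ->] := eqVneq (G i j) 0; rewrite ?mulr0.
Qed.

Hypothesis obtuse : forall i j, i != j -> G i j <= 0.

Lemma obtuse_dot_edges c d :
  (forall i j, (c i - c j) * (d i - d j) <= 0) -> 0 <= dot (combo c) (combo d) ->
  forall i j, G i j != 0 -> (c i - c j) * (d i - d j) = 0.
Proof.
move=> le0 dot_ge0 i j Gij.
pose h i j := (c i - c j) * (d i - d j) * G i j.
have h_ge0 k l : 0 <= h k l.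
  have [->|kl] := eqVneq k l; first by rewrite /h !subrr !mul0r.
  exact: mulr_le0 (le0 k l) (obtuse kl).
have sum_h : \sum_k \sum_l h k l = 0.
  apply/eqP; rewrite eq_le sumr_ge0 ?andbT => [|k _]; last exact: sumr_ge0.
  by rewrite -oppr_ge0 -laplacian_dot mulr_ge0.
have /eqP := @psumr_eq0P _ _ predT (fun l => h i l) (fun l _ => h_ge0 i l)
  (@psumr_eq0P _ _ predT _ (fun k _ => sumr_ge0 _ (fun l _ => h_ge0 k l)) sum_h i isT) j isT.
by rewrite /h mulf_eq0 (negPf Gij) orbF => /eqP.
Qed.

Hypothesis v_inL : forall i, inL s (v i).
Hypothesis v_span : forall x, inL s x -> exists c, x = combo c.

Lemma superbase_drop_span j x : inL s x -> exists c, x = \sum_(i | i != j) c i *: v i.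
Proof.
move=> /v_span [c ->]; exists (fun i => c i - c j).
by rewrite (combo_shift c (c j)) (bigD1 j) //= subrr scale0r add0r.
Qed.

Definition spanned_on Q x := exists c, (forall i, ~~ Q i -> c i = 0) /\ x = combo c.

Lemma combo_inL c : inL s (combo c).
Proof. by rewrite /inL dot_suml big1 // => i _; rewrite dotZl v_inL mulr0. Qed.

Lemma combo_delta k : combo (fun i => (i == k)%:R) = v k.
Proof.
rewrite (bigD1 k) //= eqxx scale1r big1 ?addr0 // => i /negPf ->.
by rewrite scale0r.
Qed.

Lemma combo_sub_delta a c : v a - combo c = combo (fun i => (i == a)%:R - c i).
Proof. by rewrite -(combo_delta a) -sumrB; apply: eq_bigr => i _; rewrite scalerBl. Qed.

Lemma spanned_on_vec Q k : Q k -> spanned_on Q (v k).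
Proof.
move=> Qk; exists (fun i => (i == k)%:R); split; last by rewrite combo_delta.
by move=> i; apply: contraNeq; rewrite pnatr_eq0 eqb0 negbK => /eqP ->.
Qed.

Lemma superbase_split a (P : pred 'I_K) :
  (forall i j, i != a -> j != a -> P i -> ~~ P j -> G i j = 0) ->
  orth_split s (fun b => spanned_on [pred i | (i != a) && (P i == b)]).
Proof.
move=> cut; split.
- by move=> b x [c [_ ->]]; apply: combo_inL.
- move=> x y [c [c0 ->]] [d [d0 ->]]; rewrite dot_combo.
  apply: big1 => i _; apply: big1 => j _.
  have [/andP [ia Pi]|nSi] := boolP ((i != a) && P i); last by rewrite c0 ?mul0r //= eqb_id.
  have [/andP [ja nPj]|nTj] := boolP ((j != a) && ~~ P j).
    by rewrite cut ?mulr0.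
  by rewrite d0 ?mulr0 ?mul0r //= eqbF_neg.
move=> x /v_span [c def_x]; rewrite (combo_shift c (c a)) in def_x.
pose part b i := ((i != a) && (P i == b))%:R * (c i - c a).
exists (combo (part true)), (combo (part false)); split.
- by exists (part true); split => // i /negPf; rewrite /part /= => ->; rewrite mul0r.
- by exists (part false); split => // i /negPf; rewrite /part /= => ->; rewrite mul0r.
rewrite def_x -big_split /=; apply: eq_bigr => i _; rewrite -scalerDl /part.
have [->|ia] := eqVneq i a; first by rewrite subrr !mulr0.
by case: (P i); rewrite /= ?mul1r ?mul0r ?add0r ?addr0.
Qed.

Lemma reducible_split a : reducible s (v a) ->
  exists X, [/\ orth_split s X, straddles X (v a) & forall b, b != a -> exists t : bool, X t (v b)].
Proof.
move=> /reducible_witness [x [y [Lx Ly x0 y0 [def_va xy_ge0]]]].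
have [c def_x] := v_span Lx.
pose d i := (i == a)%:R - c i.
have def_y : y = combo d by rewrite -combo_sub_delta -def_x def_va addrC addKr.
have le0 i j : (c i - c j) * (d i - d j) <= 0.
  apply: (split_unit_mul_le0 (c := (i == a)%:R - (j == a)%:R)); first by rewrite /d; ring.
  by case: (i == a); case: (j == a).
have /(obtuse_dot_edges le0) edge : 0 <= dot (combo c) (combo d) by rewrite -def_x -def_y.
pose P i := c i == c a.
(* [combo f + combo g = v_a] splits [v_a] along the cut; on the Gram edges
   [combo f] pairs with [y], and [combo g] with [x], exactly as [y] and [x]
   pair with themselves, so neither component vanishes. *)
pose f i : int := - ((i != a) && P i)%:R.
pose g i : int := - (~~ P i)%:R.
have f_edge i j : G i j != 0 -> (f i - f j) * (d i - d j) = (d i - d j) * (d i - d j).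
  move/edge; rewrite /f /d /P; case: (eqVneq i a) => [->|ia]; case: (eqVneq j a) => [->|ja];
    rewrite /= ?eqxx //=; do ?case: eqP => /= ?; nia.
have g_edge i j : G i j != 0 -> (g i - g j) * (c i - c j) = (c i - c j) * (c i - c j).
  move/edge; rewrite /g /d /P; case: (eqVneq i a) => [->|ia]; case: (eqVneq j a) => [->|ja];
    rewrite /= ?eqxx //=; do ?case: eqP => /= ?; nia.
exists (fun b => spanned_on [pred i | (i != a) && (P i == b)]); split.
- apply: superbase_split => i j ia ja /eqP Pi /eqP Pj; apply/eqP; apply: contraT => /edge.
  by rewrite /d (negPf ia) (negPf ja) => e; exfalso; apply: Pj; nia.
- exists (combo f), (combo g); split.
  + by exists f; split=> // i; rewrite /f /=; case: (i != a); case: (P i).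
  + exists g; split=> // i; rewrite /g /=; case: (eqVneq i a) => [->|_]; first by rewrite /P eqxx.
    by case: (P i).
  + apply: contra y0 => /eqP f0; rewrite -dot_self_eq0 def_y.
    by rewrite -(dot_combo_edges f_edge) f0 dot0l.
  + apply: contra x0 => /eqP g0; rewrite -dot_self_eq0 def_x.
    by rewrite -(dot_combo_edges g_edge) g0 dot0l.
  rewrite -combo_delta (combo_shift _ 1) -big_split /=; apply: eq_bigr => i _.
  rewrite -scalerDl /f /g /P; case: (eqVneq i a) => [->|ia]; rewrite ?eqxx ?subrr ?oppr0 //.
  by case: eqP => /=; rewrite ?subr0 ?sub0r ?oppr0 ?add0r ?addr0.
move=> b ba; exists (P b); apply: spanned_on_vec; by rewrite /= ba eqxx.
Qed.

End Superbase.

Section Changemaker.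
Variables (n : nat) (s : 'rV[int]_n.+1).
Hypothesis cm : changemaker s.

Local Notation vec := 'rV[int]_n.+1.
Local Notation sg i := (s ord0 i).
Local Notation e_ k := (delta_mx ord0 k : vec).
Implicit Types (x y z t : vec) (i j k : 'I_n.+1).

Lemma e_entry k i : e_ k ord0 i = (i == k)%:R.
Proof. by rewrite mxE eqxx. Qed.

Lemma neq0_of_entry_N1 x k : x ord0 k = -1 -> x != 0.
Proof. by move=> xk; apply/eqP => x0; move: xk; rewrite x0 mxE. Qed.

Lemma lt0_ord i : (0 < i)%N = (i != ord0).
Proof. by rewrite lt0n. Qed.

Definition psum m : int := \sum_(i < n.+1 | (i < m)%N) sg i.

Definition supported_below m x := forall k, (m <= k)%N -> x ord0 k = 0.

Lemma sg0 : sg ord0 = 1.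
Proof. by case: cm => + _; apply. Qed.

Lemma sg_succ i j : val j = (val i).+1 -> sg i <= sg j /\ sg j <= 1 + psum j.
Proof.
move=> ji; case: cm => _ /(_ i j ji) [le_ij bound_j]; split=> //; rewrite /psum.
by under eq_bigl => k do rewrite [(j : nat)]ji ltnS.
Qed.

Lemma sg_mono i j : (i <= j)%N -> sg i <= sg j.
Proof.
have step l : (l < n)%N -> sg (inord l) <= sg (inord l.+1).
  by move=> ln; apply: (sg_succ _).1; rewrite /= !inordK //; lia.
suff mono l : (i <= l)%N -> (l <= n)%N -> sg i <= sg (inord l).
  by move=> ij; rewrite -(inord_val j); apply: mono; rewrite // -ltnS.
elim: l => [|l IH] il ln.
  by rewrite (_ : inord 0 = i) //; apply: val_inj; rewrite /= inordK //; lia.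
have [<-|ne] := eqVneq (i : nat) l.+1; first by rewrite inord_val.
by apply: le_trans (IH _ _) (step _ _); lia.
Qed.

Lemma sg_ge1 i : 1 <= sg i.
Proof. by rewrite -sg0; apply: sg_mono. Qed.

Lemma sg_gt0 i : 0 < sg i.
Proof. exact: lt_le_trans (sg_ge1 i). Qed.

Lemma sg_le_psum j : sg j <= 1 + psum j.
Proof.
case: (posnP j) => [j0|j_gt0].
  have -> : j = ord0 by apply: val_inj.
  by rewrite sg0 /psum big_pred0 ?addr0.
by apply: (sg_succ (i := inord j.-1) _).2; rewrite /= inordK ?prednK // ltnW.
Qed.

Lemma psumS m : (m <= n)%N -> psum m.+1 = psum m + sg (inord m).
Proof.
move=> mn; rewrite /psum (bigD1 (inord m)) /= ?inordK ?ltnSn // addrC; congr (_ + _).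
apply: eq_bigl => i; rewrite ltnS; apply/andP/idP => [[i_le /eqP ne]|lt_im].
  rewrite ltn_neqAle i_le andbT; apply/eqP => im; apply: ne; apply: val_inj.
  by rewrite /= inordK.
by split; [exact: ltnW | apply/eqP => /(congr1 val); rewrite /= inordK //; lia].
Qed.

Lemma subset_sum m (t : int) : (m <= n.+1)%N -> 0 <= t <= psum m ->
  exists chi : vec, [/\ forall i, chi ord0 i = 0 \/ chi ord0 i = 1,
                        supported_below m chi & dot chi s = t].
Proof.
elim: m t => [|m IH] t mn /andP [t_ge0 t_le].
  exists 0; split=> [i|k _|]; rewrite ?mxE ?dot0l; [by left | by [] |].
  by move: t_le; rewrite /psum big_pred0 //; lia.
have bound := sg_le_psum (inord m); rewrite inordK // in bound.
move: t_le; rewrite psumS // => t_le.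
have [le_t|lt_t] := lerP (sg (inord m)) t; last first.
  have [chi [chi01 supp dot_chi]] := IH t (ltnW mn) ltac:(apply/andP; split; lia).
  by exists chi; split=> // k mk; apply: supp; lia.
have [chi [chi01 supp dot_chi]] := IH (t - sg (inord m)) (ltnW mn) ltac:(apply/andP; split; lia).
exists (chi + e_ (inord m)); split.
- move=> i; rewrite mxE e_entry; have [->|im] := eqVneq i (inord m); last by rewrite addr0.
  by rewrite supp ?inordK //; right.
- move=> k mk; have km : k != inord m by apply: contraTneq mk => ->; rewrite inordK // ltnn.
  by rewrite mxE e_entry (negPf km) addr0 supp //; lia.
by rewrite dotDl dot_chi dot_deltal subrK.
Qed.

Lemma nonneg_inL_eq0 y : inL s y -> (forall i, 0 <= y ord0 i) -> y = 0.
Proof.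
move=> Ly y_ge0; apply/rowP => i; rewrite mxE.
have terms_ge0 k : predT k -> 0 <= y ord0 k * sg k by move=> _; rewrite mulr_ge0 // ltW ?sg_gt0.
have /eqP := @psumr_eq0P _ _ predT _ terms_ge0 Ly i isT.
by rewrite mulf_eq0 (gt_eqF (sg_gt0 i)) orbF => /eqP.
Qed.

Lemma disjoint_split_eq0 y z t j : inL s y -> inL s z ->
  (forall k, y ord0 k + z ord0 k = t ord0 k) -> (forall k, y ord0 k * z ord0 k = 0) ->
  (forall k, k != j -> 0 <= t ord0 k) -> y = 0 \/ z = 0.
Proof.
move=> Ly Lz yz_t yz0 t_ge0.
have [yj0|yj_ne0] := eqVneq (y ord0 j) 0; [left | right]; apply: nonneg_inL_eq0 => // k;
  have := yz0 k; have := yz_t k; have [->|/t_ge0] := eqVneq k j; rewrite ?yj0 //; nia.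
Qed.

Lemma indecomposable_01 t j : t ord0 j = -1 ->
  (forall k, k != j -> t ord0 k = 0 \/ t ord0 k = 1) -> indecomposable s t.
Proof.
move=> tj t01 y z Ly Lz def_t yz0.
have yz_t k : y ord0 k + z ord0 k = t ord0 k by rewrite -def_t mxE.
have prod0 : forall k, y ord0 k * z ord0 k = 0.
  move=> k; apply: (dot_eq0_entries yz0) => {}k; have := yz_t k.
  by have [->|/t01 [] ->] := eqVneq k j; rewrite ?tj; nia.
by apply: (disjoint_split_eq0 Ly Lz yz_t prod0 (j := j)) => k /t01 [] ->.
Qed.

Section TightVector.
Variables (t : vec) (j : 'I_n.+1).
Hypotheses (j_gt0 : (0 < j)%N) (t0 : t ord0 ord0 = 2).
Hypotheses (t_mid : forall k, (0 < k < j)%N -> t ord0 k = 1) (tj : t ord0 j = -1).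
Hypothesis t_high : supported_below j.+1 t.

Lemma tight_entry k : k != ord0 ->
  [\/ (0 < k < j)%N /\ t ord0 k = 1, k = j | (j < k)%N /\ t ord0 k = 0].
Proof.
move=> k0; have k_gt0 : (0 < k)%N by rewrite lt0_ord.
case: (ltngtP k j) => [kj|jk|/val_inj ->]; last by constructor 2.
  by constructor 1; split; [rewrite k_gt0 | apply: t_mid; rewrite k_gt0].
by constructor 3; split=> //; apply: t_high.
Qed.

Lemma tight_split_unit_shape y z : (forall k, y ord0 k + z ord0 k = t ord0 k) ->
  dot y z = 0 -> y ord0 ord0 = 1 ->
  [/\ forall i, (i < j)%N -> 0 <= y ord0 i <= 1, y ord0 j = 0 \/ y ord0 j = -1 &
      exists2 k : 'I_n.+1, (j < k)%N &
        y ord0 k ^+ 2 = 1 /\ forall i, (j < i)%N -> i != k -> y ord0 i = 0].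
Proof.
move=> yz_t yz0 y0.
have z0 : z ord0 ord0 = 1 by have := yz_t ord0; rewrite t0 y0; lia.
have sum_rest : \sum_(k | k != ord0) y ord0 k * z ord0 k = -1.
  by move: yz0; rewrite /dot (bigD1 ord0) //= y0 z0 mul1r => /eqP; rewrite addrC addr_eq0 => /eqP.
have le0 k : k != ord0 -> y ord0 k * z ord0 k <= 0.
  move=> k0; apply: split_unit_mul_le0 (yz_t k) _.
  by case: (tight_entry k0) => [[_ ->]|->|[_ ->]]; rewrite ?tj.
have ge_m1 := sum_nonpos_ge_m1 sum_rest le0.
have low k : k != ord0 -> (k <= j)%N -> y ord0 k = 0 \/ y ord0 k = t ord0 k.
  move=> k0 kj; apply: unit_split_cases (yz_t k) _ (ge_m1 k k0).
  by case: (tight_entry k0) => [[_ ->]|->|[jk _]]; rewrite ?tj //; lia.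
split.
- move=> i ij; have [->|i0] := eqVneq i ord0; first by rewrite y0.
  case: (low i i0 (ltnW ij)) => ->; rewrite ?lexx //.
  by case: (tight_entry i0) => [[_ ->]|ji|[ji _]] //; [rewrite ji ltnn in ij | lia].
- by rewrite -tj; apply: low; rewrite -?lt0n.
apply: sum_sqr_eq1; rewrite -[1]opprK -sum_rest [in RHS](bigID (fun k : 'I_n.+1 => (k <= j)%N)) /=.
rewrite [in RHS]big1 ?add0r -?sumrN => [|i /andP [i0 ij]]; last first.
  by have := yz_t i; case: (low i i0 ij) => ->; [rewrite mul0r | nia].
apply: eq_big => [i|i ji]; last by have := yz_t i; rewrite t_high // => zi; rewrite expr2; nia.
by rewrite -ltnNge andb_idl // => ji; apply: contraTneq ji => ->; rewrite ltn0.
Qed.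

(* The only freedom left is a single coordinate [k > j] with [y_k = +-1];
   then [y . s = 0] fails since [s_k >= s_j = 1 + psum j] exceeds what the
   coordinates up to [j] can compensate. *)
Lemma tight_split_unit_false y z : sg j = 1 + psum j -> inL s y ->
  (forall k, y ord0 k + z ord0 k = t ord0 k) -> dot y z = 0 -> y ord0 ord0 = 1 -> False.
Proof.
move=> tight Ly yz_t yz0 y0.
have [y_mid yj [k jk [yk1 others0]]] := tight_split_unit_shape yz_t yz0 y0.
pose C := \sum_(i < n.+1 | (i < j)%N) y ord0 i * sg i.
have C_ge1 : 1 <= C.
  rewrite /C (bigD1 ord0) //= y0 sg0 mul1r lerDl; apply: sumr_ge0 => i /andP [ij _].
  by have := y_mid i ij; have := sg_gt0 i; nia.
have C_le : C <= psum j.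
  by apply: ler_sum => i ij; have := y_mid i ij; have := sg_gt0 i; nia.
have high_sum : \sum_(i < n.+1 | (j < i)%N) y ord0 i * sg i = y ord0 k * sg k.
  by rewrite (bigD1 k) //= big1 ?addr0 // => i /andP [ji ik]; rewrite others0 ?mul0r.
have := Ly; rewrite /inL /dot (sum_ord_split_at _ j) high_sum -/C.
have := sg_mono (ltnW jk); have := sg_gt0 k.
by case: yj => ->; rewrite expr2 in yk1; nia.
Qed.

Lemma tight_indecomposable : sg j = 1 + psum j -> indecomposable s t.
Proof.
move=> tight y z Ly Lz def_t yz0.
have yz_t k : y ord0 k + z ord0 k = t ord0 k by rewrite -def_t mxE.
have [y01|y0_ne1] := eqVneq (y ord0 ord0) 1.
  by case: (tight_split_unit_false tight Ly yz_t yz0 y01).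
have prod0 : forall k, y ord0 k * z ord0 k = 0.
  move=> k; apply: (dot_eq0_entries yz0) => {}k; have := yz_t k.
  by have [->|/tight_entry [[_ ->]|->|[_ ->]]] := eqVneq k ord0; rewrite ?tj ?t0; nia.
apply: (disjoint_split_eq0 Ly Lz yz_t prod0 (j := j)) => k kj.
have [->|/tight_entry [[_ ->]|kj'|[_ ->]]] := eqVneq k ord0; rewrite ?t0 //.
by rewrite kj' eqxx in kj.
Qed.

End TightVector.

Lemma ord_gt_eqF i k : (i < k)%N -> (k == i) = false.
Proof. by move=> ik; apply/negbTE; rewrite neq_ltn ik orbT. Qed.

Lemma exists_triangular_indecomposable j : (0 < j)%N ->
  exists u, [/\ inL s u, u ord0 j = -1, supported_below j.+1 u & indecomposable s u].
Proof.
move=> j_gt0; have j0 : (j == ord0) = false by apply: ord_gt_eqF.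
have [le_psum|gt_psum] := lerP (sg j) (psum j).
  have [chi [chi01 supp dot_chi]] := subset_sum (ltnW (ltn_ord j)) (t := sg j)
    ltac:(by rewrite le_psum andbT ltW ?sg_gt0).
  have chij : chi ord0 j = 0 by apply: supp.
  exists (chi - e_ j); split.
  - by rewrite /inL dotBl dot_chi dot_deltal subrr.
  - by rewrite !mxE ?eqxx /= chij sub0r.
  - by move=> k jk; rewrite !mxE ?eqxx /= supp ?(ltnW jk) // ord_gt_eqF ?subrr.
  apply: (@indecomposable_01 _ j); first by rewrite !mxE ?eqxx /= chij sub0r.
  by move=> k /negbTE kj; rewrite !mxE ?eqxx /= kj subr0; apply: chi01.
have tight : sg j = 1 + psum j by have := sg_le_psum j; lia.
pose below := \row_(k < n.+1) ((k < j)%N%:R : int).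
have below_entry k : below ord0 k = (k < j)%N%:R by rewrite mxE.
exists (below + e_ ord0 - e_ j); split.
- have dot_below : dot below s = psum j.
    rewrite /dot /psum [RHS]big_mkcond; apply: eq_bigr => k _; rewrite below_entry.
    by case: (k < j)%N; rewrite ?mul1r ?mul0r.
  by rewrite /inL dotBl dotDl !dot_deltal dot_below sg0 tight; lia.
- by rewrite !mxE ?eqxx /= ltnn j0 add0r.
- move=> k jk; rewrite !mxE ?eqxx /= ltnNge ltnW // !ord_gt_eqF //.
  exact: leq_ltn_trans jk.
apply: (@tight_indecomposable _ j j_gt0); last exact: tight.
- by rewrite !mxE ?eqxx /= eq_sym j0 subr0 (_ : (_ < j)%N = true) //.
- move=> k /andP [k0 kj]; rewrite !mxE ?eqxx /= kj (ord_gt_eqF (i := ord0)) //.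
  by rewrite eq_sym ord_gt_eqF ?subr0 ?addr0.
- by rewrite !mxE ?eqxx /= ltnn j0 add0r.
move=> k jk; rewrite !mxE ?eqxx /= ltnNge ltnW // !ord_gt_eqF //.
exact: leq_ltn_trans jk.
Qed.

Lemma supported_below1_eq0 x : inL s x -> supported_below 1 x -> x = 0.
Proof.
move=> Lx supp; apply/rowP => k; rewrite mxE; case: (posnP k) => [k0|/supp //].
rewrite (_ : k = ord0); last exact: val_inj.
move: Lx; rewrite /inL /dot (bigD1 ord0) //= sg0 mulr1 big1 ?addr0 // => i i0.
by rewrite supp ?mul0r // lt0_ord.
Qed.

(* The coordinates of [y] below [m] are forced to be proportional to those
   of [s] by orthogonality with [e_i - s_i e_0]; then [y . s = 0] gives
   [y_0 * \sum_(i < m) s_i ^ 2 = s_m <= 1 + \sum_(i < m) s_i], which leaves no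
   room for any [s_i > 1]. *)
Lemma ones_below_of_orth (m : 'I_n.+1) y : (0 < m)%N -> inL s y -> y ord0 m = -1 ->
  supported_below m.+1 y -> (forall x, inL s x -> supported_below m x -> dot y x = 0) ->
  forall i, (i < m)%N -> sg i = 1.
Proof.
move=> m_gt0 Ly ym supp orth.
have y_prop i : (i < m)%N -> y ord0 i = sg i * y ord0 ord0.
  move=> im; have [->|i0] := eqVneq i ord0; first by rewrite sg0 mul1r.
  have L_ei : inL s (e_ i - sg i *: e_ ord0).
    by rewrite /inL dotBl dotZl !dot_deltal sg0 mulr1 subrr.
  have supp_ei : supported_below m (e_ i - sg i *: e_ ord0).
    move=> k mk; rewrite !mxE ?eqxx /= (ord_gt_eqF (leq_trans im mk)).
    by rewrite (ord_gt_eqF (i := ord0)) ?mulr0 ?subr0 // (leq_trans m_gt0).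
  by move/eqP: (orth _ L_ei supp_ei); rewrite dotBr dotZr !dot_deltar subr_eq0 => /eqP.
pose Q := \sum_(i < n.+1 | (i < m)%N) sg i ^+ 2.
have yQ : y ord0 ord0 * Q = sg m.
  have high0 : \sum_(k < n.+1 | (m < k)%N) y ord0 k * sg k = 0.
    by apply: big1 => k mk; rewrite supp ?mul0r.
  move: Ly; rewrite /inL /dot (sum_ord_split_at _ m) high0 ym addr0 mulN1r /Q mulr_sumr.
  move=> /eqP; rewrite subr_eq0 => /eqP <-.
  by apply: eq_bigr => i im; rewrite (y_prop i) // mulrAC mulrC expr2.
have psum_le_Q : psum m <= Q.
  by apply: ler_sum => k _; rewrite expr2 ler_peMl ?sg_ge1 // ltW ?sg_gt0.
have Q_ge1 : 1 <= Q.
  by rewrite /Q (bigD1 ord0) //= sg0 expr1n lerDl; apply: sumr_ge0 => k _; apply: sqr_ge0.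
have bound_m := sg_le_psum m; have sgm_ge1 := sg_ge1 m.
have y0_ge1 : 1 <= y ord0 ord0 by nia.
have Q_le : Q <= 1 + psum m by nia.
move=> i im; have excess : sg i ^+ 2 - sg i <= Q - psum m.
  rewrite /Q /psum -sumrB (bigD1 i) //= lerDl; apply: sumr_ge0 => k _.
  by rewrite expr2 subr_ge0 ler_peMl ?sg_ge1 // ltW ?sg_gt0.
by have := sg_ge1 i; move: excess Q_le; rewrite expr2; nia.
Qed.

Definition simple_root (d : nat) : vec := e_ (inord d.-1) - e_ (inord d).

Lemma eq_inord k a : (a <= n)%N -> (k == inord a) = (k == a :> nat).
Proof. by move=> an; rewrite -val_eqE /= inordK. Qed.

Lemma simple_root_entry d k : (0 < d <= n)%N ->
  simple_root d ord0 k = (k == d.-1 :> nat)%:R - (k == d :> nat)%:R.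
Proof. by move=> /andP [d0 dn]; rewrite !mxE ?eqxx /= !eq_inord // (leq_trans (leq_pred d)). Qed.

Lemma simple_root_indecomposable d : (0 < d <= n)%N -> sg (inord d.-1) = sg (inord d) ->
  [/\ inL s (simple_root d), simple_root d != 0 & indecomposable s (simple_root d)].
Proof.
move=> dn sg_eq; have [d0 d_le] := andP dn.
have rd : simple_root d ord0 (inord d) = -1.
  by rewrite simple_root_entry // inordK // eqxx gtn_eqF ?sub0r // ltn_predL.
split.
- by rewrite /inL dotBl !dot_deltal sg_eq subrr.
- exact: neq0_of_entry_N1 rd.
apply: (indecomposable_01 rd) => k kd.
by rewrite simple_root_entry // -(eq_inord _ d_le) (negPf kd) subr0; case: eqP; auto.
Qed.

Lemma dot_simple_root_succ d : (0 < d)%N -> (d < n)%N ->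
  dot (simple_root d) (simple_root d.+1) = -1.
Proof.
by move=> d0 dn; rewrite dotBl !dot_deltal !simple_root_entry ?inordK; lia.
Qed.

Lemma dot_supported m x y : supported_below m x ->
  dot x y = \sum_(k < n.+1 | (k < m)%N) x ord0 k * y ord0 k.
Proof.
move=> supp; rewrite /dot [RHS]big_mkcond; apply: eq_bigr => k _.
by case: ltnP => // mk; rewrite supp ?mul0r.
Qed.

(* Orthogonality to the simple roots makes [y] constant below [m], so
   [y . y = y_0 * (y . s) = 0]. *)
Lemma orth_simple_roots_eq0 m y : (m <= n.+1)%N -> (forall i, (i < m)%N -> sg i = 1) ->
  inL s y -> supported_below m y -> (forall d, (0 < d < m)%N -> dot y (simple_root d) = 0) ->
  y = 0.
Proof.
move=> mn ones Ly supp orth.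
have const d : (d < m)%N -> y ord0 (inord d) = y ord0 ord0.
  elim: d => [|d IH] dm; first by congr (y ord0 _); apply: val_inj; rewrite /= inordK.
  move/eqP: (orth d.+1 dm); rewrite dotBr !dot_deltar subr_eq0 /= IH => [/eqP <- //|].
  exact: ltnW.
apply/eqP; rewrite -dot_self_eq0 (dot_supported _ supp); apply/eqP.
have -> : \sum_(k < n.+1 | (k < m)%N) y ord0 k * y ord0 k =
          y ord0 ord0 * \sum_(k < n.+1 | (k < m)%N) y ord0 k * sg k.
  rewrite mulr_sumr; apply: eq_bigr => k km.
  by rewrite ones // mulr1 -(inord_val k) const // inord_val mulrC.
by rewrite -(dot_supported _ supp) Ly mulr0.
Qed.

Lemma one_class_below (T : eqType) (R : T -> vec -> Prop) (t0 : T) m :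
  orth_classes s R -> (m <= n.+1)%N -> (forall i, (i < m)%N -> sg i = 1) ->
  exists a, forall x, inL s x -> x != 0 -> indecomposable s x -> supported_below m x -> R a x.
Proof.
move=> [orthR coverR] mn ones.
have root d : (0 < d < m)%N ->
    [/\ inL s (simple_root d), simple_root d != 0 & indecomposable s (simple_root d)].
  move=> /andP [d0 dm]; apply: simple_root_indecomposable; first by rewrite d0; lia.
  by rewrite !ones ?inordK //; lia.
case: (ltnP 1 m) => [m_gt1|m_le1]; last first.
  exists t0 => x Lx /eqP x0 _ supp; case: x0; apply: supported_below1_eq0 => // k k1.
  exact/supp/(leq_trans m_le1).
have [a Ra] : exists a, R a (simple_root 1) by have [] := root 1%N m_gt1; apply: coverR.
have chain d : (0 < d < m)%N -> R a (simple_root d).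
  elim: d => [//|d IH] /andP [_ dm]; case: (posnP d) => [-> //|d_gt0].
  have [Ld d0 indd] := root d.+1 ltac:(by rewrite dm).
  have [c Rc] := coverR _ Ld d0 indd; have [-> //|ac] := eqVneq a c.
  have dn : (d < n)%N by rewrite -ltnS (leq_trans dm).
  have Rd : R a (simple_root d) by apply: IH; rewrite d_gt0 ltnW.
  by move: (dot_simple_root_succ d_gt0 dn); rewrite (orthR _ _ _ _ ac Rd Rc).
exists a => x Lx /eqP x0 indx supp; have [b Rb] := coverR x Lx (introN eqP x0) indx.
have [<- //|ba] := eqVneq b a; case: x0; apply: (orth_simple_roots_eq0 (m := m)) => // d dm.
exact: (orthR _ _ _ _ ba Rb (chain d dm)).
Qed.

Section Triangular.
Variable u : 'I_n.+1 -> vec.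
Hypothesis u_tri : forall j, (0 < j)%N ->
  [/\ inL s (u j), u j ord0 j = -1, supported_below j.+1 (u j) & indecomposable s (u j)].

Lemma orth_triangular_below m y : (forall j, (0 < j)%N -> (j < m)%N -> dot y (u j) = 0) ->
  forall x, inL s x -> supported_below m x -> dot y x = 0.
Proof.
elim: m => [|m IH] orth x Lx supp.
  by rewrite (supported_below1_eq0 Lx) ?dot0r // => k k1; apply: supp.
case: (posnP m) => [m0|m_gt0].
  by rewrite (supported_below1_eq0 Lx) ?dot0r // => k k1; apply: supp; rewrite m0.
case: (leqP n.+1 m) => [nm|mn].
  apply: IH => [j j0 jm|//|k mk]; first by apply: orth => //; lia.
  by have := ltn_ord k; lia.
pose M := Ordinal mn; have [LuM uMM suppM _] := u_tri (j := M) m_gt0.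
have -> : x = (x + x ord0 M *: u M) - x ord0 M *: u M by rewrite addrK.
rewrite dotBr dotZr (orth M) // mulr0 subr0; apply: IH => [j j0 jm||k mk].
- by apply: orth => //; lia.
- by rewrite /inL dotDl dotZl LuM mulr0 addr0.
- rewrite !mxE; case: (ltngtP m k) => [mk'|km|mk'].
  + by rewrite (supp k) // (suppM k) // mulr0 addr0.
  + by move: mk km; rewrite leqNgt => /negPf ->.
  + by rewrite (_ : k = M) ?uMM ?mulrN1 ?subrr //; apply: val_inj.
Qed.

Lemma triangular_detect z : inL s z -> (forall j, (0 < j)%N -> dot z (u j) = 0) -> z = 0.
Proof.
move=> Lz orth; apply/eqP; rewrite -dot_self_eq0; apply/eqP.
apply: (orth_triangular_below (m := n.+1)) => // [j j0 _|k]; first exact: orth.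
by rewrite leqNgt ltn_ord.
Qed.

Lemma triangular_two_classes (T : eqType) (R : T -> vec -> Prop) (t0 : T) :
  orth_classes s R -> exists a b, forall j, (0 < j)%N -> R a (u j) \/ R b (u j).
Proof.
move=> classesR; have [orthR coverR] := classesR.
have class_u j : (0 < j)%N -> exists c, R c (u j).
  by move=> j0; have [Lu uj _ indu] := u_tri j0; apply: coverR (neq0_of_entry_N1 uj) indu.
suff: forall m, (m <= n.+1)%N ->
    exists a b, forall j, (0 < j)%N -> (j < m)%N -> R a (u j) \/ R b (u j).
  by move/(_ _ (leqnn _)) => [a [b ab]]; exists a, b => j j0; apply: ab.
elim=> [|m IH] mn; first by exists t0, t0.
have [a [b ab]] := IH (ltnW mn).
case: (posnP m) => [m0|m_gt0]; first by exists a, b => j j0 jm; exfalso; lia.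
pose M := Ordinal mn; have [c Rc] := class_u M m_gt0.
have upto_M j : (j < m.+1)%N -> (j < m)%N \/ j = M.
  by rewrite ltnS leq_eqVlt => /orP [/eqP jm|]; [right; apply: val_inj | left].
have [ca|ca] := eqVneq c a.
  by exists a, b => j j0 /upto_M [/(ab j j0) //|->]; left; rewrite -ca.
have [cb|cb] := eqVneq c b.
  by exists a, b => j j0 /upto_M [/(ab j j0) //|->]; right; rewrite -cb.
have orthM j : (0 < j)%N -> (j < m)%N -> dot (u M) (u j) = 0.
  move=> j0 jm; case: (ab j j0 jm) => Ruj; first exact: orthR ca Rc Ruj.
  exact: orthR cb Rc Ruj.
have [LuM uMM suppM _] := u_tri (j := M) m_gt0.
have ones := ones_below_of_orth (m := M) m_gt0 LuM uMM suppM (orth_triangular_below orthM).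
have [d Rd] := one_class_below t0 classesR (ltnW mn) ones.
exists d, c => j j0 /upto_M [jm|->]; [left | by right].
have [Lu uj suppj indu] := u_tri j0; apply: Rd (neq0_of_entry_N1 uj) indu _ => // k mk.
exact/suppj/(leq_trans jm).
Qed.

End Triangular.

Lemma cm_two_classes (T : eqType) (R : T -> vec -> Prop) (t0 : T) : orth_classes s R ->
  exists a b, forall z, inL s z -> (forall y, R a y \/ R b y -> dot z y = 0) -> z = 0.
Proof.
have ex_u j : exists u : vec, (0 < j)%N ->
    [/\ inL s u, u ord0 j = -1, supported_below j.+1 u & indecomposable s u].
  case: (posnP j) => [j0|/exists_triangular_indecomposable [x ux]]; last by exists x.
  by exists 0; rewrite j0.
have [u u_tri] := fin_all_exists ex_u.
move=> classesR; have [a [b ab]] := triangular_two_classes u_tri t0 classesR.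
by exists a, b => z Lz orth; apply: (triangular_detect u_tri) => // j /ab /orth.
Qed.

Lemma cm_split_side_sub X Y : nontrivial_split s X -> nontrivial_split s Y ->
  forall g, exists d, forall x, X g x -> Y d x.
Proof.
move=> ntX ntY; have [[g1 d1] [[g2 d2] detect]] :=
  cm_two_classes (true, true) (split_cells_orth_classes ntX.1 ntY.1).
exact: split_side_sub ntX ntY detect.
Qed.

Definition cm_basis (l : 'I_n) : vec := e_ (lift ord0 l) - sg (lift ord0 l) *: e_ ord0.

Lemma cm_basis_inL l : inL s (cm_basis l).
Proof. by rewrite /inL dotBl dotZl !dot_deltal sg0 mulr1 subrr. Qed.

Lemma cm_basis_free (a : 'I_n -> int) : \sum_l a l *: cm_basis l = 0 -> forall l, a l = 0.
Proof.
move=> a0 l; have := congr1 (fun x : vec => x ord0 (lift ord0 l)) a0.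
rewrite /= summxE (bigD1 l) //= big1 => [|k kl]; last first.
  by rewrite !mxE ?eqxx /= (inj_eq lift_inj) eq_sym (negPf kl) mulr0 subrr mulr0.
by rewrite !mxE ?eqxx /= mulr0 subr0 mulr1; apply.
Qed.

Lemma cm_basis_expand x : inL s x -> x = \sum_l x ord0 (lift ord0 l) *: cm_basis l.
Proof.
move=> Lx; apply/rowP => i; rewrite summxE.
under eq_bigr => k _ do rewrite !mxE ?eqxx /=.
case: (unliftP ord0 i) => [l ->|->].
  rewrite (bigD1 l) //= (inj_eq lift_inj) eqxx /= mulr0 subr0 mulr1 big1 ?addr0 // => k kl.
  by rewrite (inj_eq lift_inj) eq_sym (negPf kl) mulr0 subrr mulr0.
move: Lx; rewrite /inL /dot (bigD1_ord ord0 (P := xpredT)) //= sg0 mulr1 => /eqP.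
rewrite addr_eq0 => /eqP ->; rewrite -sumrN; apply: eq_bigr => k _.
by rewrite sub0r mulr1 mulrN.
Qed.

(* Both families span [L] and [cm_basis] is free, so the two change-of-basis
   matrices are inverse to each other. *)
Lemma cm_spanning_free (w : 'I_n -> vec) : (forall l, inL s (w l)) ->
  (forall x, inL s x -> exists c : 'I_n -> int, x = \sum_l c l *: w l) ->
  forall c : 'I_n -> int, \sum_l c l *: w l = 0 -> forall l, c l = 0.
Proof.
move=> Lw span_w c c0.
pose U : 'M[int]_(n, n.+1) := \matrix_l cm_basis l.
pose V : 'M[int]_(n, n.+1) := \matrix_l w l.
have rowsE (M : 'M[int]_(n, n.+1)) (a : 'rV_n) : a *m M = \sum_k a ord0 k *: row k M.
  exact: mulmx_sum_row.
have freeU (a : 'rV[int]_n) : a *m U = 0 -> a = 0.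
  rewrite rowsE => a0; apply/rowP => l; rewrite mxE; apply: cm_basis_free l.
  by rewrite -[RHS]a0; apply: eq_bigr => k _; rewrite rowK.
pose A : 'M[int]_n := \matrix_(l, k) w l ord0 (lift ord0 k).
have VAU : V = A *m U.
  apply/row_matrixP => l; rewrite row_mul !rowK rowsE {1}(cm_basis_expand (Lw l)).
  by apply: eq_bigr => k _; rewrite !rowK !mxE.
have [B UBV] : exists B : 'M[int]_n, U = B *m V.
  have [b bE] := fin_all_exists (fun l => span_w (cm_basis l) (cm_basis_inL l)).
  exists (\matrix_(l, l') b l l'); apply/row_matrixP => l; rewrite row_mul !rowK rowsE {1}bE.
  by apply: eq_bigr => l' _; rewrite !rowK !mxE.
have cV0 : (\row_l c l) *m V = 0.
  by rewrite rowsE -[RHS]c0; apply: eq_bigr => l _; rewrite !rowK mxE.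
by move=> l; move/rowP/(_ l): (free_of_mutual_span VAU UBV freeU cV0); rewrite !mxE.
Qed.

Lemma cm_drop_one_basis (v : 'I_n.+1 -> vec) j : (forall i, inL s (v i)) ->
  (forall x, inL s x -> exists c, x = \sum_(i | i != j) c i *: v i) ->
  basisL s (fun i => i != j) v.
Proof.
move=> Lv span; split=> [|c c0 i ij]; first by split.
have free := @cm_spanning_free (fun l => v (lift j l)) (fun l => Lv _) _ (fun l => c (lift j l)).
case: (unliftP j i) ij => [k -> _|->]; last by rewrite eqxx.
apply: free => [x /span [d ->]|].
  by exists (fun l => d (lift j l)); move: (sum_neq_lift (fun i => d i *: v i) j) => /= ->.
by move: (sum_neq_lift (fun i => c i *: v i) j); rewrite /= c0 => <-.
Qed.

End Changemaker.

Theorem lemma4p5 (r : nat) (s : 'rV[int]_r)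
  (hs : changemaker s)
  (hlast : exists i : 'I_r, val i = r.-1 /\ 2 <= s ord0 i)
  (v : 'I_(r.-1).+1 -> 'rV[int]_r)
  (hv : obtuse_superbase s v) :
  (forall i j, reducible s (v i) -> reducible s (v j) -> i = j) /\
  (exists j, (forall i, i != j -> irreducible s (v i)) /\
             basisL s (fun i => i != j) v).
Proof.
(* [hlast] is only used to exclude [r = 0]: the argument works for every
   changemaker vector. *)
case: r s hs hlast v hv => [|n] s hs hlast v hv; first by case: hlast => -[].
case: hv => [[Lv0 span0] [obtuse sum_v]].
have Lv i : inL s (v i) := Lv0 i isT.
have span x : inL s x -> exists c, x = \sum_i c i *: v i by move=> /span0.
have unique_red i j : reducible s (v i) -> reducible s (v j) -> i = j.
  move=> red_i red_j; apply/eqP; apply: contraT => ij.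
  have [X [splitX strX sideX]] := reducible_split sum_v obtuse Lv span red_i.
  have [Y [splitY strY _]] := reducible_split sum_v obtuse Lv span red_j.
  have /sideX [g Xvj] : j != i by rewrite eq_sym.
  have [d XY] := cm_split_side_sub hs (straddles_nontrivial splitX strX)
                   (straddles_nontrivial splitY strY) g.
  by case: (side_not_straddles splitY (XY _ Xvj) strY).
split=> //.
have [j red_j] : exists j, forall i, reducible s (v i) -> i = j.
  have [[j red_vj]|no_red] := classic (exists j, reducible s (v j)).
    by exists j => i /unique_red; apply.
  by exists ord0 => i red_i; case: no_red; exists i.
have basis := cm_drop_one_basis hs Lv (superbase_drop_span sum_v span j).
exists j; split=> // i ij; apply: NNPP => not_irr.
have /red_j ji : reducible s (v i) by split=> //; split=> //; apply: basisL_neq0 basis ij.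
by rewrite ji eqxx in ij.
Qed.
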